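(* If $K$ is upward directed, then for every $a\in K$ and every loop $\bar p$ based at $a$, the cycle $\chi_{\bar p}$ is an orthogonal projection of the form $Q\otimes I$ on $H_a\otimes l^2(S_a)$ (zero on the other summands of $\mathcal H$), where $Q$ is the orthogonal projection of $H_a$ onto the domain $H_{\bar p}$.
   Context: $K$ is a partially ordered set; it is upward directed if any two elements have a common upper bound. Elementary paths on $K$: for $b\le a$ the formal symbol $(b,a)$ and for $b\ge a$ the formal symbol $\overline{(b,a)}$; both have starting point $\partial_1=a$ and ending point $\partial_0=b$; $(a,a)=\overline{(a,a)}=:i_a$ is the trivial path. $\overline S$ is the set of finite sequences $\bar p=s_n*\cdots*s_1$ of elementary paths with $\partial_0 s_{i-1}=\partial_1 s_i$; $\partial_1\bar p=\partial_1 s_1$, $\partial_0\bar p=\partial_0 s_n$, and the concatenation $\bar p*\bar q$ is defined when $\partial_1\bar p=\partial_0\bar q$. The equivalence $\sim$ on $\overline S$ is the smallest equivalence relation compatible with concatenation such that for all $a\le b\le c$: $(a,b)*(b,c)\sim(a,c)$, $\overline{(c,b)}*\overline{(b,a)}\sim\overline{(c,a)}$, $(a,b)*\overline{(b,a)}\sim i_a$, $\overline{(b,a)}*(a,b)\sim i_b$. Equivalence classes $p=[\bar p]$ are called paths. $S_a$ denotes the set of paths $p$ with $\partial_0p=a$. A loop based at $a$ is $\bar p\in\overline S$ with $\partial_0\bar p=\partial_1\bar p=a$. For each $a\in K$, $H_a$ is a Hilbert space with orthonormal basis $\{e^a_n\}_{n\ge1}$; for $a\le b$, $\gamma_{ba}:H_a\to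 H_b$ is an isometry mapping each basis vector $e^a_n$ to a basis vector of $\{e^b_m\}$, with $\gamma_{aa}=\mathrm{id}$ and $\gamma_{ca}=\gamma_{cb}\gamma_{ba}$ for $a\le b\le c$. $l^2(S_a)$ is the Hilbert space with orthonormal basis $\{e_p\}_{p\in S_a}$, and $\mathcal H=\bigoplus_{a\in K}H_a\otimes l^2(S_a)$. For $a\le b$, $\chi_a^b\in B(\mathcal H)$ vanishes on all summands other than $H_a\otimes l^2(S_a)$ and satisfies $\chi_a^b(h\otimes e_p)=\gamma_{ba}(h)\otimes e_{[\overline{(b,a)}*\bar p]}$ for $h\in H_a$, $p\in S_a$, $\bar p\in p$; $\chi_a^{b*}$ is its adjoint. For an elementary path put $\chi_{\overline{(b,a)}}=\chi_a^b$ ($a\le b$) and $\chi_{(b,a)}=\chi_b^{a*}$ ($b\le a$), and for $\bar p=s_n*\cdots*s_1\in\overline S$ put $\chi_{\bar p}=\chi_{s_n}\cdots\chi_{s_1}$. For a loop $\bar p$, $\chi_{\bar p}$ is called a cycle. The domain $H_{\bar p}$ of $\bar p$ is the closed subspace of $H_{\partial_1\bar p}$ consisting of the vectors $h$ with $\|\chi_{\bar p}(h\otimes e_s)\|=\|h\|$ for all $s\in S_{\partial_1\bar p}$. *)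

From Stdlib Require Import Reals List Classical ClassicalEpsilon.
Import ListNotations.
Set Implicit Arguments.
Open Scope R_scope.

Section PathsAndCycles.

Variable K : Type.
Variable le : K -> K -> Prop.

(** * Elementary paths.
    [Dn b a] is the symbol (b,a) with b <= a ; [Up b a] is overline(b,a) with b >= a.
    In both cases the starting point is a and the ending point is b. *)
Inductive elem : Type := Dn (b a : K) | Up (b a : K).

Definition e_start (s : elem) : K := match s with Dn _ a | Up _ a => a end.
Definition e_end (s : elem) : K := match s with Dn b _ | Up b _ => b end.
Definition e_ok (s : elem) : Prop :=
  match s with Dn b a => le b a | Up b a => le a b end.

(** A sequence s_n * ... * s_1 is stored as the list [s_n; ...; s_1]
    (s_1 is traversed first); concatenation p * q is list append p ++ q. *)
Fixpoint chain (l : list elem) : Prop :=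
  match l with
  | [] => True
  | [s] => e_ok s
  | s :: ((t :: _) as l') => e_ok s /\ e_start s = e_end t /\ chain l'
  end.

Definition valid (l : list elem) : Prop := l <> [] /\ chain l.

Definition has_end (l : list elem) (b : K) : Prop :=
  exists s l', l = s :: l' /\ e_end s = b.
Definition has_start (l : list elem) (a : K) : Prop :=
  exists l' s, l = l' ++ [s] /\ e_start s = a.

(** generating relations of ~ (the last one identifies (a,a) with overline(a,a) = i_a) *)
Inductive gen : list elem -> list elem -> Prop :=
| gen_dd a b c : le a b -> le b c -> gen [Dn a b; Dn b c] [Dn a c]
| gen_uu a b c : le a b -> le b c -> gen [Up c b; Up b a] [Up c a]
| gen_du a b : le a b -> gen [Dn a b; Up b a] [Dn a a]
| gen_ud a b : le a b -> gen [Up b a; Dn a b] [Dn b b]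
| gen_id a : gen [Dn a a] [Up a a].

Inductive pequiv : list elem -> list elem -> Prop :=
| pe_gen l p q r : gen p q -> valid (l ++ p ++ r) -> pequiv (l ++ p ++ r) (l ++ q ++ r)
| pe_refl p : pequiv p p
| pe_sym p q : pequiv p q -> pequiv q p
| pe_trans p q r : pequiv p q -> pequiv q r -> pequiv p r.

Record Path : Type := mkPath {
  pmem : list elem -> Prop ;
  pmem_cls : exists q, valid q /\ forall x, pmem x <-> pequiv q x }.

(** \partial_0 P = b ; so P \in S_b *)
Definition pend (P : Path) (b : K) : Prop :=
  exists q, pmem P q /\ valid q /\ has_end q b.

Definition pcons (s : elem) (P P' : Path) : Prop :=
  exists q, pmem P q /\ valid (s :: q) /\ pmem P' (s :: q).

(** * Hilbert spaces.  Complex scalars are pairs of reals. *)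
Definition Cx : Type := (R * R)%type.
Definition c0 : Cx := (0, 0).
Definition cnorm2 (z : Cx) : R := fst z * fst z + snd z * snd z.

(** squared norm of a vector of l^2(X), as supremum of finite partial sums *)
Definition fin_sums {X : Type} (v : X -> Cx) (t : R) : Prop :=
  exists l : list X, NoDup l /\ t = fold_right Rplus 0 (map (fun x => cnorm2 (v x)) l).
Definition sqnorm_is {X : Type} (v : X -> Cx) (r : R) : Prop := is_lub (fin_sums v) r.
Definition l2 {X : Type} (v : X -> Cx) : Prop := exists r, sqnorm_is v r.

(** H_a = l^2(N) (basis e_n); orthogonality to a set D of vectors of H_a,
    with <u,w> = sum_n u_n conj(w_n) *)
Definition orth (u : nat -> Cx) (D : (nat -> Cx) -> Prop) : Prop :=
  forall w, D w ->
    infinite_sum (fun n => fst (u n) * fst (w n) + snd (u n) * snd (w n)) 0 /\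
    infinite_sum (fun n => snd (u n) * fst (w n) - fst (u n) * snd (w n)) 0.

Definition is_proj (D : (nat -> Cx) -> Prop) (h q : nat -> Cx) : Prop :=
  D q /\ orth (fun n => (fst (h n) - fst (q n), snd (h n) - snd (q n))) D.

(** \mathcal H = \bigoplus_a H_a \otimes l^2(S_a) = l^2 of the basis
    { e^a_n \otimes e_P : a \in K, n, P \in S_a } *)
Definition Idx : Type := (K * nat * Path)%type.
Definition inH (v : Idx -> Cx) : Prop :=
  (forall c n P, ~ pend P c -> v (c, n, P) = c0) /\ l2 v.

(** operator sending the basis vector e_x to e_y whenever Rl x y
    (Rl a partial injection), and killing the other basis vectors *)
Definition push {X : Type} (Rl : X -> X -> Prop) (v : X -> Cx) (y : X) : Cx :=
  epsilon (inhabits c0)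
    (fun c => (exists x, Rl x y /\ c = v x) \/ (~ (exists x, Rl x y) /\ c = c0)).

(** gamma_{ba} maps e^a_n to e^b_{g b a n} *)
Variable g : K -> K -> nat -> nat.

(** chi_a^b (h \otimes e_P) = gamma_{ba} h \otimes e_{[overline(b,a) * P]} on the a-summand *)
Definition Rchi (a b : K) (x y : Idx) : Prop :=
  fst (fst x) = a /\ pend (snd x) a /\
  fst (fst y) = b /\ snd (fst y) = g b a (snd (fst x)) /\
  pcons (Up b a) (snd x) (snd y).

Definition chi (a b : K) : (Idx -> Cx) -> (Idx -> Cx) := push (Rchi a b).
Definition chi_star (a b : K) : (Idx -> Cx) -> (Idx -> Cx) :=
  push (fun x y => Rchi a b y x).

Definition chi_e (s : elem) : (Idx -> Cx) -> (Idx -> Cx) :=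
  match s with Up b a => chi a b | Dn b a => chi_star b a end.

Fixpoint chi_seq (l : list elem) (v : Idx -> Cx) : Idx -> Cx :=
  match l with [] => v | s :: l' => chi_e s (chi_seq l' v) end.

(** h \otimes e_s in the a-summand *)
Definition tensor (a : K) (h : nat -> Cx) (s : Path) (x : Idx) : Cx :=
  if excluded_middle_informative (fst (fst x) = a /\ snd x = s)
  then h (snd (fst x)) else c0.

(** domain H_p of a sequence p starting at a *)
Definition dom (a : K) (p : list elem) (h : nat -> Cx) : Prop :=
  l2 h /\
  forall s, pend s a -> forall r, sqnorm_is h r ->
    sqnorm_is (chi_seq p (tensor a h s)) r.

End PathsAndCycles.

From Stdlib Require Import Reals List Classical ClassicalEpsilon.
From Stdlib Require Import FinFun Lra FunctionalExtensionality PropExtensionality ProofIrrelevance.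
Import ListNotations.
Open Scope R_scope.

(** Each [chi_s] maps basis vectors [e^c_n \otimes e_P] to basis vectors or to 0 along
    a partial injection of indices ([Rstep]), so [chi_p] acts on coordinates along the
    composite partial injection [Rseq p].  Two facts make this composite diagonal:
    - combinatorial: a loop [p] at [a] acts trivially on paths ending at [a], i.e.
      [p * q ~ q] ([loop_contract]); one detours every step of [p] through a common
      upper bound [c] of all its vertices, which exists since [K] is directed;
    - arithmetic: seen in [H_c], each step moves the index by [gamma_{c,-}]-compatible
      maps, so a loop moves [n] to [m] only if [gamma_{ca} n = gamma_{ca} m], i.e. [m = n].
    Hence [chi_p] keeps exactly the coordinates [(a, n, s)] with [n] a fixed point of the
    index map and kills the others: it is [mask D \otimes I] ([cycle_on_tensor]).
    Finally [H_p] is the coordinate subspace over [D], so [mask D] is the orthogonal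
    projection onto it ([mask_is_proj]). *)

Definition Ssum {X : Type} (v : X -> Cx) (l : list X) : R :=
  fold_right Rplus 0 (map (fun x => cnorm2 (v x)) l).

Lemma Ssum_cons {X} (v : X -> Cx) x l : Ssum v (x :: l) = cnorm2 (v x) + Ssum v l.
Proof. reflexivity. Qed.

Lemma Ssum_app {X} (v : X -> Cx) l1 l2 : Ssum v (l1 ++ l2) = Ssum v l1 + Ssum v l2.
Proof.
  induction l1 as [|x l1 IH]; [unfold Ssum; simpl; lra|].
  simpl app. rewrite !Ssum_cons, IH. lra.
Qed.

Lemma Ssum_map {X Y} (v : Y -> Cx) (e : X -> Y) l : Ssum v (map e l) = Ssum (fun x => v (e x)) l.
Proof. induction l as [|x l IH]; [reflexivity|]. simpl map. rewrite !Ssum_cons, IH. reflexivity. Qed.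

Lemma Ssum_le {X} (v w : X -> Cx) l :
  (forall x, cnorm2 (v x) <= cnorm2 (w x)) -> Ssum v l <= Ssum w l.
Proof.
  intros H. induction l as [|x l IH]; [unfold Ssum; simpl; lra|].
  rewrite !Ssum_cons. specialize (H x). lra.
Qed.

Lemma cnorm2_ge0 z : 0 <= cnorm2 z.
Proof. unfold cnorm2. nra. Qed.

Lemma cnorm2_c0 : cnorm2 c0 = 0.
Proof. unfold cnorm2, c0. simpl. lra. Qed.

Lemma cnorm2_pos z : z <> c0 -> cnorm2 z > 0.
Proof.
  intros H. destruct z as [x y]. unfold cnorm2. simpl.
  destruct (Req_dec x 0), (Req_dec y 0); [subst; exfalso; apply H; reflexivity|nra|nra|nra].
Qed.

Lemma lub_approx E r eps : is_lub E r -> eps > 0 -> exists t, E t /\ t > r - eps.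
Proof.
  intros [U L] He. apply NNPP. intros N.
  assert (Ub : is_upper_bound E (r - eps)).
  { intros t Et. apply Rnot_lt_le. intros C. apply N. exists t. split; auto. }
  specialize (L _ Ub). lra.
Qed.

Lemma lub_ext E F r : (forall t, E t <-> F t) -> is_lub E r -> is_lub F r.
Proof.
  intros H [U L]. split.
  - intros t Ft. apply U, H, Ft.
  - intros b Ub. apply L. intros t Et. apply Ub, H, Et.
Qed.

Lemma l2_of_bound {X} (v : X -> Cx) M : (forall t, fin_sums v t -> t <= M) -> l2 v.
Proof.
  intros H. destruct (completeness (fin_sums v)) as [m Hm].
  - exists M. intros t Ht. apply H, Ht.
  - exists 0, []. split; [constructor|reflexivity].
  - exists m. exact Hm.
Qed.

Lemma l2_le {X} (v w : X -> Cx) : (forall x, cnorm2 (v x) <= cnorm2 (w x)) -> l2 w -> l2 v.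
Proof.
  intros H [r [U _]]. apply (l2_of_bound _ r). intros t [l [Nl ->]].
  apply Rle_trans with (Ssum w l); [apply Ssum_le; auto|]. apply U. exists l. auto.
Qed.

Lemma l2_slice {X Y} (v : Y -> Cx) (e : X -> Y) : Injective e -> l2 v -> l2 (fun x => v (e x)).
Proof.
  intros Ie [r [U _]]. apply (l2_of_bound _ r). intros t [l [Nl ->]].
  apply U. exists (map e l). split; [apply Injective_map_NoDup; auto|].
  exact (eq_sym (Ssum_map v e l)).
Qed.

Lemma infinite_sum_zero (f : nat -> R) : (forall n, f n = 0) -> infinite_sum f 0.
Proof.
  intros H eps He. exists 0%nat. intros n _.
  assert (Z : sum_f_R0 f n = 0).
  { induction n as [|n IH]; simpl; rewrite H; [reflexivity|]. rewrite IH. lra. }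
  unfold Rdist. rewrite Z, Rminus_0_r, Rabs_R0. lra.
Qed.

Lemma push_spec {X : Type} (Rl : X -> X -> Prop) (v : X -> Cx) (y : X) :
  (forall x x', Rl x y -> Rl x' y -> x = x') ->
  (forall x, Rl x y -> push Rl v y = v x) /\ ((~ exists x, Rl x y) -> push Rl v y = c0).
Proof.
  intros U. unfold push.
  set (Q := fun c => (exists x, Rl x y /\ c = v x) \/ (~ (exists x, Rl x y) /\ c = c0)).
  assert (HQ : exists c, Q c).
  { destruct (classic (exists x, Rl x y)) as [[x H]|H].
    - exists (v x). left. eauto.
    - exists c0. right. auto. }
  pose proof (epsilon_spec (inhabits c0) Q HQ) as S.
  split.
  - intros x Hx. destruct S as [[x' [H' E]]|[N _]].
    + rewrite E, (U x x'); auto.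
    + exfalso. eauto.
  - intros N. destruct S as [[x' [H' E]]|[_ E]]; [exfalso; eauto|exact E].
Qed.

Definition mask {X : Type} (D : X -> Prop) (h : X -> Cx) (n : X) : Cx :=
  if excluded_middle_informative (D n) then h n else c0.

Lemma mask_le {X} (D : X -> Prop) h x : cnorm2 (mask D h x) <= cnorm2 (h x).
Proof.
  unfold mask. destruct (excluded_middle_informative _); [lra|].
  rewrite cnorm2_c0. apply cnorm2_ge0.
Qed.

Lemma mask_idem {X} (D : X -> Prop) h : mask D (mask D h) = mask D h.
Proof.
  apply functional_extensionality. intros n. unfold mask.
  destruct (excluded_middle_informative _); auto.
Qed.

Lemma mask_norm_vanish {X} (D : X -> Prop) (w : X -> Cx) r n :
  sqnorm_is w r -> sqnorm_is (mask D w) r -> ~ D n -> w n = c0.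
Proof.
  intros [U _] Hm Dn. apply NNPP. intros Nz. pose proof (cnorm2_pos _ Nz) as Pos.
  destruct (lub_approx _ _ _ Hm Pos) as [t [[l [Nl ->]] Gt]].
  change (Ssum (mask D w) l > r - cnorm2 (w n)) in Gt.
  assert (Rn : cnorm2 (mask D w n) = 0).
  { unfold mask. destruct (excluded_middle_informative _); [contradiction|apply cnorm2_c0]. }
  destruct (classic (In n l)) as [I|I].
  - destruct (in_split _ _ I) as [la [lb ->]].
    assert (Ssum w (la ++ n :: lb) <= r) by (apply U; exists (la ++ n :: lb); split; [exact Nl|reflexivity]).
    rewrite !Ssum_app, !Ssum_cons in *.
    pose proof (Ssum_le (mask D w) w la (mask_le D w)).
    pose proof (Ssum_le (mask D w) w lb (mask_le D w)). lra.
  - assert (Ssum w (n :: l) <= r) by (apply U; exists (n :: l); split; auto; constructor; auto).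
    rewrite Ssum_cons in *.
    pose proof (Ssum_le (mask D w) w l (mask_le D w)). lra.
Qed.

Section Tensor.
Variables (K : Type) (le : K -> K -> Prop) (a : K) (s : Path le).

Lemma tensor_at (h : nat -> Cx) n : tensor a h s (a, n, s) = h n.
Proof.
  unfold tensor. destruct (excluded_middle_informative _) as [_|N]; [reflexivity|].
  exfalso. apply N. simpl. auto.
Qed.

Lemma tensor_off (h : nat -> Cx) c n P : ~ (c = a /\ P = s) -> tensor a h s (c, n, P) = c0.
Proof.
  unfold tensor. destruct (excluded_middle_informative _) as [H|_]; [|reflexivity].
  simpl in H. contradiction.
Qed.

Lemma tensor_Ssum (h : nat -> Cx) l : NoDup l ->
  exists nl, NoDup nl /\ Ssum (tensor a h s) l = Ssum h nl /\ (forall n, In n nl -> In (a, n, s) l).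
Proof.
  induction l as [|x l IH]; intros Nl.
  - exists []. split; [constructor|]. split; [reflexivity|]. intros n [].
  - inversion Nl as [|? ? Nx Nl']; subst.
    destruct (IH Nl') as [nl [N1 [E1 I1]]].
    destruct x as [[c n] P].
    destruct (classic (c = a /\ P = s)) as [[-> ->]|H].
    + exists (n :: nl). split; [constructor; auto; intros Hn; apply Nx, I1, Hn|].
      split; [rewrite !Ssum_cons, tensor_at, E1; reflexivity|].
      intros m [<-|Hm]; [left; reflexivity|right; auto].
    + exists nl. split; auto. split.
      * rewrite Ssum_cons, tensor_off, cnorm2_c0, E1 by auto. lra.
      * intros m Hm. right. auto.
Qed.

Lemma tensor_norm (h : nat -> Cx) r : sqnorm_is (tensor a h s) r <-> sqnorm_is h r.
Proof.
  assert (Fs : forall t, fin_sums (tensor a h s) t <-> fin_sums h t).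
  { intros t. split.
    - intros [l [Nl ->]]. destruct (tensor_Ssum h l Nl) as [nl [N1 [E1 _]]]. exists nl. auto.
    - intros [nl [Nl ->]]. exists (map (fun n => (a, n, s)) nl). split.
      + apply Injective_map_NoDup; auto. intros x y H. injection H. auto.
      + change (Ssum h nl = Ssum (tensor a h s) (map (fun n => (a, n, s)) nl)).
        rewrite Ssum_map. clear Nl. induction nl as [|n nl IH]; [reflexivity|].
        rewrite !Ssum_cons, IH, tensor_at. reflexivity. }
  unfold sqnorm_is. split; apply lub_ext; intros t; rewrite Fs; tauto.
Qed.

End Tensor.

Section Cycles.
Variable K : Type.
Variable le : K -> K -> Prop.
Hypothesis le_refl : forall a, le a a.
Hypothesis le_trans : forall a b c, le a b -> le b c -> le a c.

Definition target (l : list (elem K)) : option K :=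
  match l with [] => None | s :: _ => Some (e_end s) end.
Fixpoint source (l : list (elem K)) : option K :=
  match l with [] => None | [s] => Some (e_start s) | _ :: l' => source l' end.

Definition link (l m : list (elem K)) : Prop :=
  forall x y, source l = Some x -> target m = Some y -> x = y.

Lemma app_nn_r (l m : list (elem K)) : m <> [] -> l ++ m <> [].
Proof. destruct l, m; simpl; congruence. Qed.
Lemma app_nn_l (l m : list (elem K)) : l <> [] -> l ++ m <> [].
Proof. destruct l, m; simpl; congruence. Qed.
Lemma cons_nn (s : elem K) l : s :: l <> [].
Proof. discriminate. Qed.
Hint Resolve app_nn_r app_nn_l cons_nn : nn.

Lemma source_cons s l : l <> [] -> source (s :: l) = source l.
Proof. destruct l; [congruence|reflexivity]. Qed.

Lemma source_app l m : m <> [] -> source (l ++ m) = source m.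
Proof.
  intros Hm. induction l as [|s l IH]; [reflexivity|].
  simpl app. rewrite source_cons; auto with nn.
Qed.

Lemma target_app l m : l <> [] -> target (l ++ m) = target l.
Proof. destruct l; [congruence|reflexivity]. Qed.

Lemma has_end_iff q a : has_end q a <-> target q = Some a.
Proof.
  split.
  - intros [s [l [-> E]]]. simpl. congruence.
  - destruct q as [|s l]; simpl; [discriminate|]. intros E. exists s, l. split; congruence.
Qed.

Lemma has_start_source q a : has_start q a -> source q = Some a.
Proof. intros [l [s [-> E]]]. rewrite source_app by discriminate. simpl. congruence. Qed.

Lemma chain_cons s l : chain le (s :: l) <-> e_ok le s /\ link [s] l /\ chain le l.
Proof.
  unfold link. destruct l as [|t l]; simpl.
  - split; [intros H; repeat split; auto; discriminate|tauto].
  - split.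
    + intros [H1 [H2 H3]]. repeat split; auto. intros x y E1 E2. congruence.
    + intros [H1 [H2 H3]]. repeat split; auto.
Qed.

Lemma chain_app l m : chain le (l ++ m) <-> chain le l /\ chain le m /\ link l m.
Proof.
  induction l as [|s l IH].
  - simpl. unfold link. simpl. split; [intros; repeat split; auto; discriminate|tauto].
  - simpl app. rewrite !chain_cons, IH.
    destruct l as [|t l].
    + unfold link; simpl. split.
      * intros [A [B [C [D E]]]]. repeat split; auto; discriminate.
      * intros [[A [B C]] [D E]]. repeat split; auto; discriminate.
    + unfold link. rewrite target_app by discriminate.
      destruct m as [|u m].
      * simpl. intuition; discriminate.
      * rewrite (source_cons s (t :: l)) by discriminate. intuition.
Qed.

Lemma valid_cons s l : l <> [] ->
  (valid le (s :: l) <-> e_ok le s /\ target l = Some (e_start s) /\ valid le l).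
Proof.
  intros Hl. unfold valid. rewrite chain_cons. unfold link. simpl.
  destruct l as [|t l]; [congruence|]. simpl. split.
  - intros [_ [H1 [H2 H3]]]. repeat split; auto. f_equal. symmetry. apply H2; reflexivity.
  - intros [H1 [H2 [_ H3]]]. repeat split; auto; try discriminate. intros x y E1 E2. congruence.
Qed.

Lemma valid_app p q : valid le p -> valid le q -> source p = target q -> valid le (p ++ q).
Proof.
  intros [Hp Cp] [Hq Cq] E. split; auto with nn. apply chain_app. repeat split; auto.
  intros x y E1 E2. congruence.
Qed.

Lemma valid_ok s l : valid le (s :: l) -> e_ok le s.
Proof. intros [_ C]. apply chain_cons in C. apply C. Qed.

Lemma valid_tl s l : valid le (s :: l) -> l <> [] -> valid le l /\ target l = Some (e_start s).
Proof. intros V H. apply valid_cons in V; tauto. Qed.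

Ltac valid_solve := repeat (rewrite valid_cons by auto with nn);
  repeat match goal with |- _ /\ _ => split end; simpl; auto.

(** * Invariance of validity and endpoints under [~] *)

Lemma gen_facts p q : gen le p q ->
  p <> [] /\ q <> [] /\ chain le q /\ target p = target q /\ source p = source q.
Proof. intros H; destruct H; simpl; repeat split; try discriminate; eauto. Qed.

Lemma valid_replace l p q r : p <> [] -> q <> [] -> chain le q ->
  target p = target q -> source p = source q -> valid le (l ++ p ++ r) ->
  valid le (l ++ q ++ r) /\ target (l ++ p ++ r) = target (l ++ q ++ r)
  /\ source (l ++ p ++ r) = source (l ++ q ++ r).
Proof.
  intros Hp Hq Cq E S [_ V].
  apply chain_app in V as [Cl [V Ll]]. apply chain_app in V as [Cp [Cr Lr]].
  split; [split|split].
  - destruct l, q; simpl; congruence.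
  - apply chain_app. split; [auto|split].
    + apply chain_app. split; [auto|split; [auto|]]. unfold link in *. rewrite <- S. auto.
    + unfold link in *. rewrite target_app by auto. rewrite <- E, <- (target_app p r) by auto. auto.
  - destruct l; [simpl; rewrite !target_app; auto|reflexivity].
  - destruct r.
    + rewrite !app_nil_r, !source_app; auto.
    + rewrite !source_app; auto with nn.
Qed.

Lemma pequiv_valid p q : pequiv le p q -> (valid le p <-> valid le q) /\
  (valid le p -> target p = target q /\ source p = source q).
Proof.
  induction 1 as [l p q r G V| p | p q _ [IH1 IH2] | p q r _ [IH1 IH2] _ [IH3 IH4]].
  - destruct (gen_facts _ _ G) as [Hp [Hq [Cq [E S]]]].
    destruct (valid_replace l _ _ r Hp Hq Cq E S V) as [V' [E' S']]. tauto.
  - tauto.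
  - split; [tauto|]. intros Vq. destruct (IH2 (proj2 IH1 Vq)). split; congruence.
  - split; [tauto|]. intros Vp. destruct (IH2 Vp). destruct (IH4 (proj1 IH1 Vp)). split; congruence.
Qed.

Lemma pequiv_valid_l p q : pequiv le p q -> valid le p -> valid le q.
Proof. intros H. apply (pequiv_valid _ _ H). Qed.

Lemma pequiv_ctx p q : pequiv le p q -> forall l r,
  valid le (l ++ p ++ r) \/ valid le (l ++ q ++ r) -> pequiv le (l ++ p ++ r) (l ++ q ++ r).
Proof.
  assert (Re : forall l a b c r : list (elem K), l ++ (a ++ b ++ c) ++ r = (l ++ a) ++ b ++ (c ++ r))
    by (intros; rewrite !app_assoc; reflexivity).
  induction 1 as [l0 p q r0 G V| p | p q _ IH | p q w _ IH1 _ IH2]; intros l r Hv.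
  - rewrite !Re in *. apply pe_gen; auto.
    destruct Hv as [Hv|Hv]; auto.
    destruct (gen_facts _ _ G) as [Hp [Hq [Cq [E S]]]].
    apply (valid_replace (l ++ l0) q p (r0 ++ r)); auto.
    destruct V as [_ V]. apply chain_app in V as [_ [V _]]. apply chain_app in V. apply V.
  - apply pe_refl.
  - apply pe_sym, IH. tauto.
  - destruct Hv as [Hv|Hv].
    + pose proof (IH1 l r (or_introl Hv)) as A.
      apply (pe_trans A). apply IH2. left. apply (pequiv_valid _ _ A). auto.
    + pose proof (IH2 l r (or_intror Hv)) as A.
      refine (pe_trans _ A). apply IH1. right. apply (pequiv_valid _ _ A). auto.
Qed.

Lemma pequiv_cons s p q : pequiv le p q -> valid le (s :: p) \/ valid le (s :: q) ->
  pequiv le (s :: p) (s :: q).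
Proof.
  intros H V. pose proof (pequiv_ctx _ _ H [s] []) as A. rewrite !app_nil_r in A. apply A. exact V.
Qed.

Lemma gen_head p q r : gen le p q -> valid le (p ++ r) -> pequiv le (p ++ r) (q ++ r).
Proof. intros G V. apply (@pe_gen K le [] p q r G V). Qed.

Lemma gen_second s p q r : gen le p q -> valid le (s :: p ++ r) ->
  pequiv le (s :: p ++ r) (s :: q ++ r).
Proof. intros G V. apply (@pe_gen K le [s] p q r G V). Qed.

(** * Contraction of loops in an upward directed poset *)

Lemma trivial_left a q : valid le q -> target q = Some a -> pequiv le (Dn a a :: q) q.
Proof.
  intros V E. assert (Hq : q <> []) by (destruct q; simpl in E; congruence).
  assert (V' : valid le (Dn a a :: q)) by valid_solve.
  destruct q as [|t q']; [congruence|].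
  destruct t as [b c|b c]; simpl in E; injection E as ->.
  - apply (gen_head [Dn a a; Dn a c] [Dn a c] q'); auto.
    constructor; auto. exact (valid_ok _ _ V).
  - assert (Hc : le c a) by exact (valid_ok _ _ V).
    assert (A : pequiv le (Dn a a :: Up a c :: q') (Up a a :: Up a c :: q'))
      by (apply (gen_head [Dn a a] [Up a a] (Up a c :: q')); [constructor|exact V']).
    apply (pe_trans A). apply (gen_head [Up a a; Up a c] [Up a c] q'); [constructor; auto|].
    exact (pequiv_valid_l _ _ A V').
Qed.

Lemma cancel_up a b q : q <> [] -> valid le (Up b a :: q) -> pequiv le (Dn a b :: Up b a :: q) q.
Proof.
  intros Hq V. pose proof (valid_ok _ _ V) as Hab. simpl in Hab.
  destruct (valid_tl _ _ V Hq) as [Vq Eq].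
  eapply pe_trans.
  - apply (gen_head [Dn a b; Up b a] [Dn a a] q); [constructor; auto|]. simpl. valid_solve.
  - apply trivial_left; auto.
Qed.

Definition bounded_by (l : list (elem K)) (c : K) : Prop :=
  forall s, In s l -> le (e_start s) c /\ le (e_end s) c.

Lemma detour_elem s r c : valid le (s :: r) -> r <> [] -> le (e_start s) c -> le (e_end s) c ->
  pequiv le (s :: r) (Dn (e_end s) c :: Up c (e_start s) :: r).
Proof.
  intros V Hr H1 H2. pose proof (valid_ok _ _ V) as Ok.
  destruct (valid_tl _ _ V Hr) as [Vr Er].
  destruct s as [y x|y x]; simpl in *.
  - assert (V1 : valid le (Dn y x :: Dn x x :: r)) by valid_solve.
    assert (V2 : valid le (Dn y x :: Dn x c :: Up c x :: r)) by valid_solve.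
    eapply pe_trans; [apply pe_sym, (gen_head [Dn y x; Dn x x] [Dn y x] r); [constructor; auto|exact V1]|].
    eapply pe_trans; [apply pe_sym, (gen_second (Dn y x) [Dn x c; Up c x] [Dn x x] r); [constructor; auto|exact V2]|].
    apply (gen_head [Dn y x; Dn x c] [Dn y c] (Up c x :: r)); [constructor; auto|exact V2].
  - assert (V1 : valid le (Up y y :: Up y x :: r)) by valid_solve.
    assert (V2 : valid le (Dn y y :: Up y x :: r)) by valid_solve.
    assert (V3 : valid le (Dn y c :: Up c y :: Up y x :: r)) by valid_solve.
    eapply pe_trans; [apply pe_sym, (gen_head [Up y y; Up y x] [Up y x] r); [constructor; auto|exact V1]|].
    eapply pe_trans; [apply pe_sym, (gen_head [Dn y y] [Up y y] (Up y x :: r)); [constructor|exact V2]|].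
    eapply pe_trans; [apply pe_sym, (gen_head [Dn y c; Up c y] [Dn y y] (Up y x :: r)); [constructor; auto|exact V3]|].
    apply (gen_second (Dn y c) [Up c y; Up y x] [Up c x] r); [constructor; auto|exact V3].
Qed.

Lemma merge_detours y z x c r : le y c -> le z c -> le x c ->
  valid le (Dn y c :: Up c z :: Dn z c :: Up c x :: r) ->
  pequiv le (Dn y c :: Up c z :: Dn z c :: Up c x :: r) (Dn y c :: Up c x :: r).
Proof.
  intros Hy Hz Hx V.
  assert (G : gen le [Up c z; Dn z c] [Dn c c]) by (constructor; auto).
  pose proof (gen_second (Dn y c) _ _ (Up c x :: r) G V) as A.
  apply (pe_trans A). apply (gen_head [Dn y c; Dn c c] [Dn y c] (Up c x :: r)).
  - apply gen_dd; auto.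
  - exact (pequiv_valid_l _ _ A V).
Qed.

Lemma detour c : forall l r x y, l <> [] -> valid le (l ++ r) -> r <> [] ->
  source l = Some x -> target l = Some y -> bounded_by l c ->
  pequiv le (l ++ r) (Dn y c :: Up c x :: r).
Proof.
  induction l as [|s l IH]; intros r x y Hl V Hr Sx Ey B; [congruence|].
  simpl in Ey. injection Ey as <-.
  assert (Bs : le (e_start s) c /\ le (e_end s) c) by (apply B; left; auto).
  destruct l as [|t l].
  - simpl in Sx. injection Sx as <-. apply detour_elem; tauto.
  - rewrite source_cons in Sx by auto with nn.
    simpl app in V. destruct (valid_tl _ _ V ltac:(auto with nn)) as [V' E'].
    assert (B' : bounded_by (t :: l) c) by (intros u Hu; apply B; right; auto).
    pose proof (IH r x (e_start s) ltac:(auto with nn) V' Hr Sx E' B') as A1.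
    apply (pequiv_cons s) in A1; [|left; exact V].
    pose proof (pequiv_valid_l _ _ A1 V) as V1.
    pose proof (detour_elem _ _ c V1 ltac:(auto with nn) (proj1 Bs) (proj2 Bs)) as A2.
    pose proof (pequiv_valid_l _ _ A2 V1) as V2.
    assert (Hx : le x c).
    { apply valid_tl in V2 as [V2 _]; auto with nn. apply valid_tl in V2 as [V2 _]; auto with nn.
      apply valid_tl in V2 as [V2 _]; auto with nn. exact (valid_ok _ _ V2). }
    simpl app. apply (pe_trans A1), (pe_trans A2). apply merge_detours; tauto.
Qed.

Hypothesis directed : forall a b, exists c, le a c /\ le b c.

Lemma exists_bound a0 l : exists c, le a0 c /\ bounded_by l c.
Proof.
  induction l as [|s l [c [H1 H2]]].
  - exists a0. split; auto. intros s [].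
  - destruct (directed c (e_start s)) as [c1 [A1 B1]].
    destruct (directed c1 (e_end s)) as [c2 [A2 B2]].
    exists c2. split; [eauto|]. intros u [<-|Hu]; [split; eauto|].
    destruct (H2 u Hu). split; eauto.
Qed.

(** Key combinatorial fact: a loop [p] at [a] acts trivially on paths ending at [a],
    i.e. [p * q ~ q].  (Detour through a common bound [c], then cancel.) *)
Lemma loop_contract a p q : valid le p -> source p = Some a -> target p = Some a ->
  valid le q -> target q = Some a -> pequiv le (p ++ q) q.
Proof.
  intros Vp Sp Ep Vq Eq.
  destruct (exists_bound a p) as [c [Hac B]].
  assert (V : valid le (p ++ q)) by (apply valid_app; congruence).
  assert (Hq : q <> []) by (destruct q; simpl in Eq; congruence).
  pose proof (detour c p q a a (proj1 Vp) V Hq Sp Ep B) as A.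
  apply (pe_trans A). eapply pe_trans.
  - apply (gen_head [Dn a c; Up c a] [Dn a a] q); [constructor; auto|exact (pequiv_valid_l _ _ A V)].
  - apply trivial_left; auto.
Qed.

Lemma pm_cls (P : Path le) q : pmem P q -> valid le q /\ forall x, pmem P x <-> pequiv le q x.
Proof.
  intros H. destruct (pmem_cls P) as [q0 [V0 E0]].
  pose proof (proj1 (E0 q) H) as A. split.
  - exact (pequiv_valid_l _ _ A V0).
  - intros x. rewrite E0. split; intros B.
    + exact (pe_trans (pe_sym A) B).
    + exact (pe_trans A B).
Qed.

Lemma pm_nn (P : Path le) q : pmem P q -> q <> [].
Proof. intros H. apply (pm_cls _ _ H). Qed.

Lemma pm_trans (P : Path le) q q' : pmem P q -> pequiv le q q' -> pmem P q'.
Proof. intros H E. apply (pm_cls _ _ H). exact E. Qed.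

Lemma pm_eq (P P' : Path le) q q' : pmem P q -> pmem P' q' -> pequiv le q q' -> P = P'.
Proof.
  intros H H' E. destruct (pm_cls _ _ H) as [_ C]. destruct (pm_cls _ _ H') as [_ C'].
  destruct P as [m1 c1], P' as [m2 c2]. simpl in *.
  assert (m1 = m2).
  { apply functional_extensionality. intros x. apply propositional_extensionality.
    rewrite C, C'. split; intros B; [exact (pe_trans (pe_sym E) B)|exact (pe_trans E B)]. }
  subst m2. f_equal. apply proof_irrelevance.
Qed.

Definition class_of (w : list (elem K)) (Vw : valid le w) : Path le :=
  mkPath (pequiv le w) (ex_intro _ w (conj Vw (fun x => iff_refl _))).

Lemma class_of_mem w Vw : pmem (class_of w Vw) w.
Proof. apply pe_refl. Qed.

Lemma pend_mk (P : Path le) a q : pmem P q -> valid le q -> target q = Some a -> pend P a.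
Proof. intros H V E. exists q. split; [auto|split; [auto|apply has_end_iff; auto]]. Qed.

Lemma pend_valid (P : Path le) a : pend P a -> exists q, pmem P q /\ valid le q /\ target q = Some a.
Proof. intros [q [H [V E]]]. exists q. split; [auto|split; [auto|apply has_end_iff; auto]]. Qed.

Lemma loop_fixes_path a p (P s : Path le) q : valid le p -> source p = Some a -> target p = Some a ->
  pend P a -> pmem P q -> pmem s (p ++ q) -> P = s.
Proof.
  intros Vp Sp Ep Pa M M'.
  destruct (pend_valid P a Pa) as [q0 [M0 [V0 E0]]].
  assert (Eq : pequiv le q0 q) by (apply (pm_cls _ _ M0); exact M).
  destruct (pequiv_valid _ _ Eq) as [[Vq _] Hend].
  destruct (Hend V0) as [Ea _].
  apply (pm_eq P s q (p ++ q) M M'). apply pe_sym. apply (loop_contract a); auto; congruence.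
Qed.

(** * The cycle operators on basis vectors *)

Variable g : K -> K -> nat -> nat.
Hypothesis g_inj : forall a b, le a b -> forall n m, g b a n = g b a m -> n = m.

(** The basis index [x = (c, n, P)] stands for [e^c_n \otimes e_P] with [P \in S_c]. *)
Definition located (x : Idx le) (c : K) : Prop := fst (fst x) = c /\ pend (snd x) c.

(** [chi_s] sends the basis vector [e_z] to [e_y] whenever [Rstep s z y];
    on the level of indices [n] of [H_c] this is the partial map [index_step s]. *)
Definition Rstep (s : elem K) : Idx le -> Idx le -> Prop :=
  match s with Up b a => Rchi g a b | Dn b a => fun z y => Rchi g b a y z end.
Definition index_step (s : elem K) (m n : nat) : Prop :=
  match s with Up b a => n = g b a m | Dn b a => m = g a b n end.

Lemma chi_e_push s : chi_e g s = push (Rstep s).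
Proof. destruct s; reflexivity. Qed.

Lemma Rstep_facts s z y : Rstep s z y ->
  located z (e_start s) /\ located y (e_end s) /\ e_ok le s /\
  index_step s (snd (fst z)) (snd (fst y)) /\
  forall q, pmem (snd z) q -> pmem (snd y) (s :: q).
Proof.
  destruct s as [b a|b a]; simpl.
  - intros [Hy [Py [Hz [Nz [q1 [M1 [V1 M2]]]]]]].
    pose proof (pm_nn _ _ M1) as Hq1.
    pose proof (valid_ok _ _ V1) as Hba. simpl in Hba.
    destruct (valid_tl _ _ V1 Hq1) as [Vq1 Eq1]. simpl in Eq1.
    assert (Vc : valid le (Dn b a :: Up a b :: q1)) by valid_solve.
    split; [split; [auto|apply pend_mk with (Up a b :: q1); auto]|].
    split; [split; auto|]. split; [auto|]. split; [auto|].
    intros q Hq. apply (pm_trans _ _ _ M1). apply pe_sym.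
    eapply pe_trans; [|apply (cancel_up b a q1 Hq1 V1)].
    apply pequiv_cons; [|right; exact Vc].
    apply pe_sym. apply (pm_cls _ _ M2). exact Hq.
  - intros [Hz [Pz [Hy [Ny [q0 [M0 [V0 M1]]]]]]].
    split; [split; auto|].
    split; [split; [auto|apply pend_mk with (Up b a :: q0); auto]|].
    split; [apply (valid_ok _ _ V0)|]. split; [auto|].
    intros q Hq. apply (pm_trans _ _ _ M1). apply pequiv_cons; auto.
    apply (pm_cls _ _ M0). exact Hq.
Qed.

(** [overline(b,a) * q ~ overline(b,a) * q'] implies [q ~ q']: multiply by [(a,b)] on the left. *)
Lemma up_cancel a b q1 q2 : q1 <> [] -> q2 <> [] -> valid le (Up b a :: q1) ->
  pequiv le (Up b a :: q1) (Up b a :: q2) -> pequiv le q1 q2.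
Proof.
  intros H1 H2 V E.
  pose proof (pequiv_valid_l _ _ E V) as V2.
  eapply pe_trans; [apply pe_sym, (cancel_up a b q1 H1 V)|].
  eapply pe_trans; [|apply (cancel_up a b q2 H2 V2)].
  apply pequiv_cons; auto. left.
  pose proof (valid_ok _ _ V) as Hab. simpl in Hab.
  rewrite valid_cons by auto with nn. simpl. auto.
Qed.

(** Each [chi_s] is a partial isometry: [Rstep s] is injective on the left. *)
Lemma Rstep_rfun s z z' y : Rstep s z y -> Rstep s z' y -> z = z'.
Proof.
  destruct z as [[k n] P], z' as [[k' n'] P'].
  destruct s as [b a|b a]; simpl.
  - intros [Hy [Py [Hz [Nz [q1 [M1 [V1 M2]]]]]]] [Hy' [Py' [Hz' [Nz' [q1' [M1' [V1' M2']]]]]]].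
    simpl in Hz, Nz, Hz', Nz', M2, M2'. subst k k' n n'.
    assert (E : pequiv le (Up a b :: q1) (Up a b :: q1')).
    { apply pequiv_cons; auto. apply (pm_cls _ _ M1). exact M1'. }
    rewrite (pm_eq P P' _ _ M2 M2' E). reflexivity.
  - intros [Hz [Pz [Hy [Nz [q1 [M1 [V1 M2]]]]]]] [Hz' [Pz' [Hy' [Nz' [q1' [M1' [V1' M2']]]]]]].
    simpl in Hz, Nz, Hz', Nz', M1, M1', Pz, Pz'. subst k k'.
    rewrite Nz in Nz'. pose proof (valid_ok _ _ V1) as Hba. simpl in Hba.
    assert (n = n') by (apply (g_inj a b Hba); exact Nz'). subst n'.
    assert (E : pequiv le (Up b a :: q1) (Up b a :: q1')) by (apply (pm_cls _ _ M2); exact M2').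
    apply up_cancel in E; eauto using pm_nn.
    rewrite (pm_eq P P' q1 q1' M1 M1' E). reflexivity.
Qed.

Lemma Rstep_exists s z n' : e_ok le s -> located z (e_start s) ->
  index_step s (snd (fst z)) n' -> exists y, Rstep s z y /\ snd (fst y) = n'.
Proof.
  destruct z as [[k m] P]. unfold located. destruct s as [b a|b a]; simpl; intros Ok [Hk Pz] Ns; subst k.
  - destruct (pend_valid P a Pz) as [q [M [V E]]].
    assert (VW : valid le (Dn b a :: q)) by (rewrite valid_cons by eauto using pm_nn; simpl; auto).
    exists ((b, n'), class_of _ VW). split; [|reflexivity].
    unfold Rchi. simpl. split; [auto|]. split; [apply pend_mk with (Dn b a :: q); auto; apply class_of_mem|].
    split; [auto|]. split; [auto|].
    exists (Dn b a :: q). split; [apply class_of_mem|].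
    assert (VV : valid le (Up a b :: Dn b a :: q)) by valid_solve.
    split; [exact VV|].
    apply (pm_trans _ _ _ M). apply pe_sym.
    eapply pe_trans; [apply (gen_head [Up a b; Dn b a] [Dn a a] q); [constructor; auto|exact VV]|].
    apply trivial_left; auto.
  - destruct (pend_valid P a Pz) as [q [M [V E]]].
    assert (VW : valid le (Up b a :: q)) by (rewrite valid_cons by eauto using pm_nn; simpl; auto).
    exists ((b, g b a m), class_of _ VW). split; [|simpl; auto].
    unfold Rchi. simpl. repeat (split; [auto|]).
    exists q. split; [auto|]. split; [auto|]. apply class_of_mem.
Qed.

Fixpoint Rseq (l : list (elem K)) : Idx le -> Idx le -> Prop :=
  match l with
  | [] => fun x y => x = y
  | s :: l' => fun x y => exists z, Rseq l' x z /\ Rstep s z y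
  end.

Fixpoint index_seq (l : list (elem K)) (m n : nat) : Prop :=
  match l with
  | [] => m = n
  | s :: l' => exists k, index_seq l' m k /\ index_step s k n
  end.

Lemma chi_seq_spec l v y :
  (forall x, Rseq l x y -> chi_seq g l v y = v x) /\
  ((~ exists x, Rseq l x y) -> chi_seq g l v y = c0).
Proof.
  revert y. induction l as [|s l IH]; intros y; simpl.
  - split; [intros; subst; reflexivity|intros N; exfalso; eauto].
  - rewrite chi_e_push.
    destruct (push_spec (Rstep s) (chi_seq g l v) y (fun x x' => Rstep_rfun s x x' y)) as [P1 P2].
    split.
    + intros x [z [Hz Rz]]. rewrite (P1 z Rz). apply (IH z). exact Hz.
    + intros N. destruct (classic (exists z, Rstep s z y)) as [[z Rz]|Nz].
      * rewrite (P1 z Rz). apply (IH z). intros [x Hx]. apply N. eauto.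
      * apply P2. exact Nz.
Qed.

Lemma Rseq_facts l : forall x y, Rseq l x y -> l <> [] ->
  exists a0 b0, source l = Some a0 /\ target l = Some b0 /\ located x a0 /\ located y b0 /\
  index_seq l (snd (fst x)) (snd (fst y)) /\ (forall q, pmem (snd x) q -> pmem (snd y) (l ++ q)).
Proof.
  induction l as [|s l IH]; intros x y H Hl; [congruence|].
  destruct H as [z [Hz Rz]].
  destruct (Rstep_facts s z y Rz) as [Lz [Ly [_ [Ns Ps]]]].
  destruct l as [|t l].
  - simpl in Hz. subst z. exists (e_start s), (e_end s). simpl.
    do 4 (split; [auto|]). split; [exists (snd (fst x)); auto|exact Ps].
  - destruct (IH x z Hz ltac:(discriminate)) as [a0 [b0 [S0 [T0 [Lx [Lz' [I0 P0]]]]]]].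
    exists a0, (e_end s). rewrite source_cons by discriminate.
    do 4 (split; [auto|]). split; [exists (snd (fst z)); auto|].
    intros q Hq. apply Ps, P0, Hq.
Qed.

Lemma Rseq_exists l : valid le l -> forall a0 x n', source l = Some a0 -> located x a0 ->
  index_seq l (snd (fst x)) n' -> exists y, Rseq l x y /\ snd (fst y) = n'.
Proof.
  induction l as [|s l IH]; intros V a0 x n' Sx Lx Nx; [destruct V; congruence|].
  destruct Nx as [k [Nk Ns]].
  destruct l as [|t l].
  - simpl in Nk, Sx. subst k. injection Sx as <-.
    destruct (Rstep_exists s x n' (valid_ok _ _ V) Lx Ns) as [y [Ry Ey]].
    exists y. split; auto. exists x. split; auto. reflexivity.
  - destruct (valid_tl _ _ V ltac:(discriminate)) as [V' E'].
    rewrite source_cons in Sx by discriminate.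
    destruct (IH V' a0 x k Sx Lx Nk) as [z [Fz Ez]].
    destruct (Rseq_facts _ _ _ Fz ltac:(discriminate)) as [a1 [b1 [_ [T1 [_ [Lz _]]]]]].
    assert (b1 = e_start s) by congruence. subst b1 k.
    destruct (Rstep_exists s z n' (valid_ok _ _ V) Lz Ns) as [y [Ry Ey]].
    exists y. split; auto. exists z. split; auto.
Qed.

Hypothesis g_comp : forall a b c, le a b -> le b c -> forall n, g c a n = g c b (g b a n).

(** Seen from a common upper bound [c], every index move is the identity:
    [gamma_{c,target} n = gamma_{c,source} m]. *)
Lemma index_step_bound s c k n : e_ok le s -> le (e_start s) c -> le (e_end s) c ->
  index_step s k n -> g c (e_end s) n = g c (e_start s) k.
Proof.
  destruct s as [b a|b a]; simpl; intros Ok H1 H2 N; subst.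
  - apply g_comp; auto.
  - symmetry. apply g_comp; auto.
Qed.

Lemma index_seq_bound c l : forall m n, index_seq l m n -> l <> [] -> valid le l -> bounded_by l c ->
  exists a0 b0, source l = Some a0 /\ target l = Some b0 /\ g c b0 n = g c a0 m.
Proof.
  induction l as [|s l IH]; intros m n Nr Hl V B; [congruence|].
  destruct Nr as [k [Nk Ns]].
  assert (Bs : le (e_start s) c /\ le (e_end s) c) by (apply B; left; auto).
  pose proof (index_step_bound s c k n (valid_ok _ _ V) (proj1 Bs) (proj2 Bs) Ns) as E.
  destruct l as [|t l].
  - simpl in Nk. subst k. exists (e_start s), (e_end s). simpl. auto.
  - destruct (valid_tl _ _ V ltac:(discriminate)) as [V' E'].
    assert (B' : bounded_by (t :: l) c) by (intros u Hu; apply B; right; auto).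
    destruct (IH m k Nk ltac:(discriminate) V' B') as [a0 [b0 [S1 [S2 S3]]]].
    exists a0, (e_end s). rewrite source_cons by discriminate.
    split; [auto|]. split; [reflexivity|]. rewrite E. congruence.
Qed.

(** * Cycles are diagonal *)

Section LoopAt.
Variables (a : K) (p : list (elem K)).
Hypotheses (Vp : valid le p) (Sp : source p = Some a) (Tp : target p = Some a).

(** The only basis vector a cycle can move onto [e^a_n \otimes e_s] is that vector
    itself: the path is fixed by [loop_contract], the index by [index_seq_bound]
    and the injectivity of [gamma_{c a}] for a common bound [c]. *)
Lemma cycle_preimage x n s : pend s a -> Rseq p x (a, n, s) -> x = (a, n, s) /\ index_seq p n n.
Proof.
  intros Ps Fx.
  destruct (Rseq_facts _ _ _ Fx (proj1 Vp)) as [a0 [b0 [S0 [T0 [[Cx Px] [_ [I0 P0]]]]]]].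
  assert (a0 = a) by congruence. subst a0. simpl in I0.
  destruct (exists_bound a p) as [c [Hac B]].
  destruct (index_seq_bound c p _ _ I0 (proj1 Vp) Vp B) as [a1 [b1 [S1 [T1 E1]]]].
  assert (a1 = a) by congruence. assert (b1 = a) by congruence. subst a1 b1.
  apply (g_inj a c Hac) in E1.
  destruct x as [[k m] P]. simpl in *. subst k m.
  destruct (pend_valid P a Px) as [q [M _]].
  rewrite (loop_fixes_path a p P s q Vp Sp Tp Px M (P0 q M)). auto.
Qed.

Lemma cycle_off_summand (v : Idx le -> Cx) c n (P : Path le) : (c <> a \/ ~ pend P a) -> chi_seq g p v (c, n, P) = c0.
Proof.
  intros H. apply (chi_seq_spec p v (c, n, P)). intros [x Fx].
  destruct (Rseq_facts _ _ _ Fx (proj1 Vp)) as [a0 [b0 [_ [T0 [_ [[C0 P0] _]]]]]].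
  simpl in C0, P0. assert (b0 = a) by congruence. subst. destruct H; auto.
Qed.

Lemma cycle_on_summand (v : Idx le -> Cx) n (s : Path le) : pend s a ->
  (index_seq p n n -> chi_seq g p v (a, n, s) = v (a, n, s)) /\
  (~ index_seq p n n -> chi_seq g p v (a, n, s) = c0).
Proof.
  intros Ps. split.
  - intros Fix.
    assert (L : located ((a, n, s) : Idx le) a) by (split; auto).
    destruct (Rseq_exists p Vp a (a, n, s) n Sp L Fix) as [y [Fy Ey]].
    destruct (Rseq_facts _ _ _ Fy (proj1 Vp)) as [a0 [b0 [_ [T0 [_ [[C0 P0] [_ Pp]]]]]]].
    assert (b0 = a) by congruence. subst b0.
    destruct (pend_valid s a Ps) as [q [M _]].
    pose proof (loop_fixes_path a p s (snd y) q Vp Sp Tp Ps M (Pp q M)) as Es.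
    destruct y as [[k m] P]. simpl in *. subst k m P.
    apply (chi_seq_spec p v). exact Fy.
  - intros NFix. apply (chi_seq_spec p v). intros [x Fx].
    apply NFix. apply (cycle_preimage x n s Ps Fx).
Qed.

Lemma cycle_on_tensor (h : nat -> Cx) (s : Path le) : pend s a ->
  chi_seq g p (tensor a h s) = tensor a (mask (fun n => index_seq p n n) h) s.
Proof.
  intros Ps. apply functional_extensionality. intros [[c n] P].
  destruct (classic (c = a /\ pend P a)) as [[-> Pa]|N].
  - destruct (cycle_on_summand (tensor a h s) n P Pa) as [OnFix OffFix].
    destruct (classic (P = s)) as [->|NP].
    + rewrite tensor_at. unfold mask.
      destruct (excluded_middle_informative (index_seq p n n)) as [Fix|NFix].
      * rewrite (OnFix Fix). apply tensor_at.
      * exact (OffFix NFix).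
    + rewrite tensor_off by tauto.
      destruct (classic (index_seq p n n)) as [Fix|NFix].
      * rewrite (OnFix Fix). apply tensor_off. tauto.
      * exact (OffFix NFix).
  - rewrite cycle_off_summand by (apply not_and_or in N; exact N).
    symmetry. apply tensor_off. intros [-> ->]. apply N. auto.
Qed.

End LoopAt.
End Cycles.

(** * Operators of the form [Q \otimes I] with [Q] a coordinate mask *)

Section Projection.
Variables (K : Type) (le : K -> K -> Prop) (g : K -> K -> nat -> nat).
Variables (a : K) (p : list (elem K)) (D : nat -> Prop).
Hypothesis p_tensor : forall (h : nat -> Cx) (s : Path le), pend s a ->
  chi_seq g p (tensor a h s) = tensor a (mask D h) s.

Lemma dom_mask h : l2 h -> dom le g a p (mask D h).
Proof.
  intros L. split.
  - apply (l2_le _ h); auto. apply mask_le.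
  - intros s Ps r Hr. rewrite p_tensor, mask_idem by auto. apply tensor_norm. auto.
Qed.

(** ... and vectors of [H_p] are supported in [D] (here [S_a] nonempty is needed). *)
Lemma dom_vanishes_off (s : Path le) w n : pend s a -> dom le g a p w -> ~ D n -> w n = c0.
Proof.
  intros Ps [[r Hr] Hd] Dn. specialize (Hd s Ps r Hr).
  rewrite p_tensor in Hd by auto. apply tensor_norm in Hd.
  exact (mask_norm_vanish D w r n Hr Hd Dn).
Qed.

(** So [H_p] is the coordinate subspace over [D], and masking is the orthogonal
    projection onto it: [h - mask D h] is supported off [D]. *)
Lemma mask_is_proj (s : Path le) h : pend s a -> l2 h -> is_proj (dom le g a p) h (mask D h).
Proof.
  intros Ps L. split; [apply dom_mask; auto|].
  intros w Dw. split; apply infinite_sum_zero; intros n; simpl; unfold mask;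
    destruct (excluded_middle_informative (D n)) as [Y|N]; try ring;
    rewrite (dom_vanishes_off s w n Ps Dw N); unfold c0; simpl; ring.
Qed.

End Projection.

Theorem theorem3p8
  (K : Type) (le : K -> K -> Prop)
  (le_refl : forall a, le a a)
  (le_antisym : forall a b, le a b -> le b a -> a = b)
  (le_trans : forall a b c, le a b -> le b c -> le a c)
  (g : K -> K -> nat -> nat)
  (g_inj : forall a b, le a b -> forall n m, g b a n = g b a m -> n = m)
  (g_id : forall a n, g a a n = n)
  (g_comp : forall a b c, le a b -> le b c -> forall n, g c a n = g c b (g b a n))
  (directed : forall a b, exists c, le a c /\ le b c) :
  forall (a : K) (p : list (elem K)),
    valid le p -> has_start p a -> has_end p a ->
    forall v : Idx le -> Cx, inH v ->
      (forall (c : K) (n : nat) (P : Path le), (c <> a \/ ~ pend P a) -> @chi_seq K le g p v (c, n, P) = c0) /\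
      (forall s : Path le, pend s a ->
         is_proj (dom le g a p) (fun n => v (a, n, s)) (fun n => @chi_seq K le g p v (a, n, s))).
Proof.
  intros a p Vp Hs He v Hv.
  pose proof (has_start_source K p a Hs) as Sp.
  pose proof (proj1 (has_end_iff K p a) He) as Tp.
  pose proof (cycle_off_summand K le le_refl le_trans g g_inj a p Vp Tp) as Off.
  pose proof (cycle_on_summand K le le_refl le_trans directed g g_inj g_comp a p Vp Sp Tp) as On.
  pose proof (cycle_on_tensor K le le_refl le_trans directed g g_inj g_comp a p Vp Sp Tp) as OnTensor.
  set (D := fun n => index_seq K g p n n).
  split; [exact (Off v)|].
  intros s Ps.
  assert (Diag : (fun n => chi_seq g p v (a, n, s)) = mask D (fun n => v (a, n, s))).
  { apply functional_extensionality. intros n. destruct (On v n s Ps) as [OnFix OffFix].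
    unfold mask. destruct (excluded_middle_informative (D n)); auto. }
  rewrite Diag. apply (mask_is_proj K le g a p D OnTensor s); [exact Ps|].
  apply (l2_slice v (fun n => (a, n, s))); [|apply Hv]. intros x y H. injection H. auto.
Qed.
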